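(* Let $f:\mathbb{R}^d\to\mathbb{R}$ satisfy the Standing Assumptions with constants $0<\mu\le L$ and $M>0$, and let $\{x_t\},\{G_t\},\{r_t\}$ be generated by General Sharpened-BFGS from some $x_0$, assuming $\nabla f(x_t)\ne0$ for all $t$ considered. Define $\xi_0=1$ and $\xi_t=\exp\!\left(2M\sum_{i=0}^{t-1}r_i\right)$ for $t\ge1$. Then for all $t\ge0$, $$\nabla^2 f(x_t)\preceq G_t\preceq \xi_t\frac{L}{\mu}\nabla^2 f(x_t).$$
   Context: Standing Assumptions: $f$ is twice differentiable, $\mu$-strongly convex and has $L$-Lipschitz gradient (so $\mu I\preceq\nabla^2f(x)\preceq LI$), and $f$ is strongly self-concordant with constant $M>0$: for all $x,y,z,w\in\mathbb{R}^d$, $\nabla^2f(y)-\nabla^2f(x)\preceq M\|y-x\|_z\nabla^2f(w)$, where $\|h\|_z:=\sqrt{h^\top\nabla^2f(z)h}$. For symmetric positive definite $A,G$ and $u\ne0$, $\mathrm{BFGS}(A,G,u):=G-\frac{Guu^\top G}{u^\top Gu}+\frac{Auu^\top A}{u^\top Au}$, and $\bar u(A,G):=\arg\max_{u\in\{e_1,\dots,e_d\}}\frac{u^\top Gu}{u^\top Au}$ (ties broken arbitrarily). General Sharpened-BFGS: set $G_0=LI$; for $t=0,1,2,\dots$: $x_{t+1}=x_t-G_t^{-1}\nabla f(x_t)$; $s_t=x_{t+1}-x_t$; $J_t=\int_0^1\nabla^2f(x_t+\tau s_t)\,d\tau$; $\bar G_t=\mathrm{BFGS}(J_t,G_t,s_t)$;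 $r_t=\|s_t\|_{x_t}$; $\hat G_t=(1+Mr_t/2)^2\bar G_t$; $\bar u=\bar u(\nabla^2f(x_{t+1}),\hat G_t)$; $G_{t+1}=\mathrm{BFGS}(\nabla^2f(x_{t+1}),\hat G_t,\bar u)$. *)

From HB Require Import structures.
From mathcomp Require Import all_boot all_order all_algebra.
From mathcomp Require Import all_classical all_reals all_analysis.
Set Implicit Arguments. Unset Strict Implicit. Unset Printing Implicit Defensive.
Import Order.TTheory GRing.Theory Num.Theory.
Import numFieldNormedType.Exports.
Local Open Scope ring_scope.

Section Defs.
Variables (R : realType) (d : nat).

Definition qform (A : 'M[R]_d) (u : 'cV[R]_d) : R := (u^T *m A *m u) 0 0.

Definition loewner_le (A B : 'M[R]_d) : Prop := forall u, qform A u <= qform B u.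

Definition lnorm (hf : 'cV[R]_d -> 'M[R]_d) (z h : 'cV[R]_d) : R :=
  Num.sqrt (qform (hf z) h).

Definition BFGS (A G : 'M[R]_d) (u : 'cV[R]_d) : 'M[R]_d :=
  G - (qform G u)^-1 *: (G *m u *m u^T *m G)
    + (qform A u)^-1 *: (A *m u *m u^T *m A).

Definition evec (i : 'I_d) : 'cV[R]_d := \col_j (i == j)%:R.

Definition is_ubar (A G : 'M[R]_d) (i : 'I_d) : Prop :=
  forall j : 'I_d, qform G (evec j) / qform A (evec j)
                   <= qform G (evec i) / qform A (evec i).

Definition Jint (hf : 'cV[R]_d -> 'M[R]_d) (x s : 'cV[R]_d) : 'M[R]_d :=
  \matrix_(i, j) Rintegral (@lebesgue_measure R) `[0%R, 1%R]%classic
                   (fun tau : R => hf (x + tau *: s) i j).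

Definition sbfgs_step (gf : 'cV[R]_d -> 'cV[R]_d) (hf : 'cV[R]_d -> 'M[R]_d)
  (M : R) (x : 'cV[R]_d) (G : 'M[R]_d) (x' : 'cV[R]_d) (G' : 'M[R]_d) : Prop :=
  let s := x' - x in
  let Gbar := BFGS (Jint hf x s) G s in
  let r := lnorm hf x s in
  let Ghat := (1 + M * r / 2) ^+ 2 *: Gbar in
  x' = x - invmx G *m gf x /\
  exists i : 'I_d, is_ubar (hf x') Ghat i /\ G' = BFGS (hf x') Ghat (evec i).

End Defs.

From HB Require Import structures.
From mathcomp Require Import all_boot all_order all_algebra.
From mathcomp Require Import all_classical all_reals all_analysis.
From mathcomp Require Import ring lra.
Set Implicit Arguments. Unset Strict Implicit. Unset Printing Implicit Defensive.
Import Order.TTheory GRing.Theory Num.Theory.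
Import numFieldNormedType.Exports.
Local Open Scope ring_scope.

(* The Hessian average J_t = int_0^1 hf (x_t + tau s_t) dtau is squeezed between
   the Hessians at both ends of the step: with c_t = 1 + M r_t / 2, strong
   self-concordance gives J_t <= c_t hf (x_t), J_t <= c_t hf (x_(t+1)) and
   hf (x_t) <= c_t J_t, hf (x_(t+1)) <= c_t J_t.  A BFGS update with curvature
   pair (A, u) preserves both A <= c G and G <= e A for c, e >= 1: it replaces
   G by A along u and leaves the restriction of G to the G-orthogonal complement
   of u, which is monotone in G.  So hf (x_t) <= G_t propagates to
   hf (x_(t+1)) <= c_t^2 Gbar_t = Ghat_t, while the upper bound loses a factor
   c_t^4 <= exp (2 M r_t) per step, starting from G_0 = L I <= (L / mu) hf (x_0). *)

Lemma lipschitz_continuous (R : realType) (g : R -> R) (K : R) :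
  (forall a b, `|g a - g b| <= K * `|a - b|) -> continuous g.
Proof.
move=> Hg t; apply/cvgrPdist_lt => e e0.
have K0 : 0 <= K.
  by have := Hg 0 1; rewrite sub0r normrN normr1 mulr1; apply: le_trans.
near=> y; apply: le_lt_trans (Hg t y) _.
have : `|t - y| < e / (K + 1).
  near: y; apply: (@cvgr_dist_lt _ _ _ (nbhs t)) => //.
  by rewrite divr_gt0 // ltr_wpDl.
rewrite ltr_pdivlMr ?ltr_wpDl //; apply: le_lt_trans.
by rewrite mulrDr mulr1 ler_wpDr // mulrC.
Unshelve. all: by end_near. Qed.

Lemma continuous_sum (R : realType) (I : Type) (s : seq I) (F : I -> R -> R) :
  (forall i, continuous (F i)) -> continuous (fun x => \sum_(i <- s) F i x).
Proof.
move=> cF; elim: s => [|a s IH].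
  rewrite (_ : (fun _ => _) = fun=> 0); first exact: cst_continuous.
  by apply/funext => x; rewrite big_nil.
rewrite (_ : (fun _ => _) = fun x => F a x + \sum_(i <- s) F i x).
  by move=> y; apply: continuousD; [exact: cF | exact: IH].
by apply/funext => x; rewrite big_cons.
Qed.

Lemma inv_tangent_le (R : realFieldType) (c z q P : R) :
  0 < c -> 0 < c + z -> 0 <= q -> q <= (c + z) * P ->
  q * (c^-1 - z / c ^+ 2) <= P.
Proof.
move=> c0 cz0 q0 qP; rewrite -(ler_pM2r cz0) [P * _]mulrC; apply: le_trans qP.
have -> : q * (c^-1 - z / c ^+ 2) * (c + z) = q - q * (z / c) ^+ 2.
  by field; exact: lt0r_neq0.
by rewrite lerBlDr lerDl mulr_ge0 ?sqr_ge0.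
Qed.

Section Integral01.
Context {R : realType}.
Local Notation mu := (@lebesgue_measure R).
Local Notation I01 := (`[0%R, 1%R]%classic : set R).

Lemma continuous_integrable01 (g : R -> R) :
  continuous g -> mu.-integrable I01 (EFin \o g).
Proof.
move=> cg; apply: continuous_compact_integrable; first exact: segment_compact.
exact: continuous_subspaceT.
Qed.

Lemma Rintegral01_cst (c : R) : \int[mu]_(t in I01) c = c.
Proof.
have mu01 : fine (mu I01) = 1 by rewrite lebesgue_measure_itv /= lte01 oppr0 adde0.
by rewrite Rintegral_cst // mu01 mulr1.
Qed.

Lemma Rintegral01_affine (A B : R) : \int[mu]_(t in I01) (A + B * t) = A + B / 2.
Proof.
have cid : continuous (@id R) by move=> t; exact: cvg_id.
have int_onem : \int[mu]_(t in I01) (1 - t) = 2^-1.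
  by rewrite -(@Rintegral_onemXn R 1); apply: eq_Rintegral => t _; rewrite expr1.
have int_id : \int[mu]_(t in I01) t = 2^-1.
  transitivity (\int[mu]_(t in I01) (1 - (1 - t))).
    by apply: eq_Rintegral => t _; rewrite subKr.
  rewrite RintegralB // ?Rintegral01_cst ?int_onem; first by field.
    exact/continuous_integrable01/cst_continuous.
  apply: continuous_integrable01 => t.
  by apply: continuousB; [exact: cst_continuous | exact: cid].
rewrite RintegralD // ?RintegralZl // ?Rintegral01_cst ?int_id //.
- exact: continuous_integrable01.
- exact/continuous_integrable01/cst_continuous.
- apply: continuous_integrable01 => t.
  by apply: continuousM; [exact: cst_continuous | exact: cid].
Qed.

Lemma continuous_affine (A B : R) : continuous (fun t : R => A + B * t).
Proof.
move=> t; apply: continuousD; first exact: cst_continuous.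
by apply: continuousM; [exact: cst_continuous | exact: cvg_id].
Qed.

Lemma le_Rintegral01 (f g : R -> R) : continuous f -> continuous g ->
  (forall t, 0 <= t <= 1 -> f t <= g t) ->
  \int[mu]_(t in I01) f t <= \int[mu]_(t in I01) g t.
Proof.
by move=> cf cg fg; apply: le_Rintegral => //; exact: continuous_integrable01.
Qed.

Lemma Rintegral01_sum (I : Type) (s : seq I) (F : I -> R -> R) :
  (forall i, continuous (F i)) ->
  \int[mu]_(t in I01) \sum_(i <- s) F i t = \sum_(i <- s) \int[mu]_(t in I01) F i t.
Proof.
move=> cF; elim: s => [|a s IH].
  by under eq_Rintegral do rewrite big_nil; rewrite big_nil Rintegral01_cst.
under eq_Rintegral do rewrite big_cons.
rewrite RintegralD // ?IH ?big_cons //; apply: continuous_integrable01 => //.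
exact: continuous_sum.
Qed.

Lemma dist_endpoint01 (tau t : R) : tau = 0 \/ tau = 1 -> 0 <= t <= 1 ->
  `|t - tau| = tau + (1 - 2 * tau) * t.
Proof.
case=> -> /andP[t0 t1]; first by rewrite subr0 ger0_norm //; ring.
by rewrite distrC ger0_norm ?subr_ge0 //; ring.
Qed.

Lemma Rintegral01_le_endpoint (Q : R -> R) (a q tau : R) :
  tau = 0 \/ tau = 1 -> continuous Q ->
  (forall t, 0 <= t <= 1 -> Q t <= (1 + a * `|t - tau|) * q) ->
  \int[mu]_(t in I01) Q t <= (1 + a / 2) * q.
Proof.
move=> htau cQ Qle.
have -> : (1 + a / 2) * q = (1 + a * tau) * q + a * (1 - 2 * tau) * q / 2.
  by field.
rewrite -Rintegral01_affine; apply: le_Rintegral01 => // [|t t01].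
  exact: continuous_affine.
by apply: le_trans (Qle t t01) _; rewrite dist_endpoint01 //; lra.
Qed.

(* Pointwise q / (1 + a |t - tau|) is bounded below by its tangent at |t - tau| = 1/2,
   an affine function of t with integral q / (1 + a / 2). *)
Lemma Rintegral01_ge_endpoint (Q : R -> R) (a q tau : R) :
  tau = 0 \/ tau = 1 -> 0 <= a -> 0 <= q -> continuous Q ->
  (forall t, 0 <= t <= 1 -> q <= (1 + a * `|t - tau|) * Q t) ->
  q <= (1 + a / 2) * \int[mu]_(t in I01) Q t.
Proof.
move=> htau a0 q0 cQ qle; set c := 1 + a / 2.
have c0 : 0 < c by rewrite /c; lra.
set A := q / c - q * a * (tau - 2^-1) / c ^+ 2.
set B := - (q * a * (1 - 2 * tau) / c ^+ 2).
have -> : q = c * (A + B / 2) by rewrite /A /B; field; exact: lt0r_neq0.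
rewrite ler_pM2l // -Rintegral01_affine; apply: le_Rintegral01 => // [|t t01].
  exact: continuous_affine.
have d0 : 0 <= `|t - tau| := normr_ge0 _.
have -> : A + B * t = q * (c^-1 - a * (`|t - tau| - 2^-1) / c ^+ 2).
  by rewrite dist_endpoint01 // /A /B; field; exact: lt0r_neq0.
apply: inv_tangent_le => //; first by rewrite /c; nra.
by apply: le_trans (qle t t01) _; rewrite /c; lra.
Qed.

End Integral01.

Section Loewner.
Context {R : realType} {d : nat}.
Implicit Types (A B C G : 'M[R]_d) (u v w : 'cV[R]_d) (k l : R).

Definition bform A u v : R := (u^T *m A *m v) 0 0.

Lemma qformE A u : qform A u = bform A u u. Proof. by []. Qed.

Lemma bform_sym A u v : A^T = A -> bform A u v = bform A v u.
Proof.
move=> sA; rewrite /bform.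
have -> : (u^T *m A *m v) 0 0 = ((u^T *m A *m v)^T) 0 0 by rewrite [RHS]mxE.
by rewrite !trmx_mul trmxK sA mulmxA.
Qed.

Lemma bformDm A B u v : bform (A + B) u v = bform A u v + bform B u v.
Proof. by rewrite /bform mulmxDr mulmxDl mxE. Qed.

Lemma bformBm A B u v : bform (A - B) u v = bform A u v - bform B u v.
Proof. by rewrite /bform mulmxBr mulmxBl !mxE. Qed.

Lemma bformZm A k u v : bform (k *: A) u v = k * bform A u v.
Proof. by rewrite /bform -scalemxAr -scalemxAl mxE. Qed.

Lemma bformDl A u v w : bform A (u + w) v = bform A u v + bform A w v.
Proof. by rewrite /bform linearD /= !mulmxDl mxE. Qed.

Lemma bformDr A u v w : bform A u (v + w) = bform A u v + bform A u w.
Proof. by rewrite /bform mulmxDr mxE. Qed.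

Lemma bformZl A k u v : bform A (k *: u) v = k * bform A u v.
Proof. by rewrite /bform linearZ /= -!scalemxAl mxE. Qed.

Lemma bformZr A k u v : bform A u (k *: v) = k * bform A u v.
Proof. by rewrite /bform -scalemxAr mxE. Qed.

Lemma bformNl A u v : bform A (- u) v = - bform A u v.
Proof. by rewrite -scaleN1r bformZl mulN1r. Qed.

Lemma bformNr A u v : bform A u (- v) = - bform A u v.
Proof. by rewrite -scaleN1r bformZr mulN1r. Qed.

Lemma bform_rank1 A u v w : bform (A *m u *m u^T *m A) v w = bform A v u * bform A u w.
Proof.
rewrite /bform (_ : v^T *m _ *m w = (v^T *m A *m u) *m (u^T *m A *m w)).
  by rewrite [LHS]mxE big_ord1.
by rewrite !mulmxA.
Qed.

Lemma bform_polar A u v : A^T = A ->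
  bform A u v = (qform A (u + v) - qform A (u - v)) / 4.
Proof.
move=> sA; rewrite !qformE !bformDl !bformDr !bformNl !bformNr (bform_sym v u sA).
by field.
Qed.

Lemma bform_evec A (i j : 'I_d) : bform A (evec R i) (evec R j) = A i j.
Proof.
have evecE (m : 'I_d) : evec R m = delta_mx m 0.
  by apply/matrixP => a b; rewrite !mxE (ord1 b) eqxx andbT eq_sym.
by rewrite /bform !evecE trmx_delta -rowE -colE !mxE.
Qed.

Lemma qform_sum A u : qform A u = \sum_k \sum_l u l 0 * A l k * u k 0.
Proof.
rewrite qformE /bform mxE; apply: eq_bigr => k _; rewrite mxE big_distrl /=.
by apply: eq_bigr => l _; rewrite mxE.
Qed.

Lemma qformZm A k u : qform (k *: A) u = k * qform A u.
Proof. exact: bformZm. Qed.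

Lemma qformZv A k u : qform A (k *: u) = k ^+ 2 * qform A u.
Proof. by rewrite !qformE bformZl bformZr mulrA expr2. Qed.

Lemma qform_scalar_mx k u : qform k%:M u = k * \sum_i u i 0 ^+ 2.
Proof.
rewrite qformE /bform mul_mx_scalar -scalemxAl !mxE; congr (_ * _).
by apply: eq_bigr => i _; rewrite mxE expr2.
Qed.

Lemma sumsq_col_gt0 u : u != 0 -> 0 < \sum_i u i 0 ^+ 2.
Proof.
move=> u0; rewrite lt_def sumr_ge0 ?andbT => [|i _]; last exact: sqr_ge0.
apply: contra u0; rewrite psumr_eq0 => [/allP u_eq0|i _]; last exact: sqr_ge0.
apply/eqP/matrixP => i j; rewrite (ord1 j) mxE.
by apply/eqP; rewrite -sqrf_eq0; apply: implyP (u_eq0 i (mem_index_enum i)) isT.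
Qed.

Lemma evec_neq0 (i : 'I_d) : evec R i != 0.
Proof.
apply/negP => /eqP /matrixP /(_ i 0); rewrite !mxE eqxx /=.
by move/eqP; rewrite oner_eq0.
Qed.

Lemma invmx_mulmx_neq0 G u : 0 < qform G u -> invmx G *m u != 0.
Proof.
move=> qGu; apply/eqP => Gu0; have [Gunit|Gsing] := boolP (G \in unitmx).
  by move: qGu; rewrite -(mulKVmx Gunit u) Gu0 mulmx0 qformE /bform mulmx0 mxE ltxx.
move: Gu0; rewrite invmx_out ?inE // => Gu0.
by move: qGu; rewrite qformE /bform -mulmxA Gu0 mulmx0 mxE ltxx.
Qed.

Lemma qform_ge0_of_pd A u : (forall v, v != 0 -> 0 < qform A v) -> 0 <= qform A u.
Proof.
move=> A_pd; have [->|u0] := eqVneq u 0; last exact/ltW/A_pd.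
by rewrite qformE /bform trmx0 !mul0mx mxE.
Qed.

Lemma qform_gt0_scalar_le k A u : 0 < k -> loewner_le k%:M A -> u != 0 -> 0 < qform A u.
Proof.
move=> k0 kA u0; apply: lt_le_trans (kA u).
by rewrite qform_scalar_mx mulr_gt0 ?sumsq_col_gt0.
Qed.

Lemma trmx_scale_sym A k : A^T = A -> (k *: A)^T = k *: A.
Proof. by move=> sA; rewrite linearZ /= sA. Qed.

Lemma loewner_trans A B C : loewner_le A B -> loewner_le B C -> loewner_le A C.
Proof. by move=> AB BC u; exact: le_trans (AB u) (BC u). Qed.

Lemma loewner_scale_trans A B C k l : 0 <= k ->
  loewner_le A (k *: B) -> loewner_le B (l *: C) -> loewner_le A ((k * l) *: C).
Proof.
move=> k0 AB BC u; apply: le_trans (AB u) _.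
by rewrite !qformZm -mulrA ler_wpM2l // -qformZm.
Qed.

(* [schur G u v] is [qform G v] for the G-orthogonal projection of [v] away from
   [u]; when [0 < qform G u] it is the minimum of [qform G (v - a *: u)] over [a]. *)
Definition schur G u v : R := qform G v - bform G v u ^+ 2 / qform G u.

Lemma qform_schur G u v : qform G v = schur G u v + bform G v u ^+ 2 / qform G u.
Proof. by rewrite /schur subrK. Qed.

Lemma schurZ G k u v : schur (k *: G) u v = k * schur G u v.
Proof.
rewrite /schur !qformZm bformZm mulrBr.
have [->|k0] := eqVneq k 0; first by rewrite !mul0r expr0n /= !mul0r subrr.
by rewrite exprMn invfM mulrACA [k ^+ 2]expr2 mulfK.
Qed.

Lemma qform_sub_scale G u v a : G^T = G -> qform G u != 0 ->
  qform G (v - a *: u) = schur G u v + (a * qform G u - bform G v u) ^+ 2 / qform G u.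
Proof.
move=> sG qu0; rewrite /schur !qformE !bformDl !bformDr !bformNl !bformNr !bformZl !bformZr.
by rewrite (bform_sym u v sG) -!qformE; field.
Qed.

Lemma le_schur_loewner G1 G2 u v : G1^T = G1 -> G2^T = G2 ->
  0 < qform G1 u -> 0 < qform G2 u -> loewner_le G1 G2 ->
  schur G1 u v <= schur G2 u v.
Proof.
move=> sG1 sG2 q1 q2 G12; set a := bform G2 v u / qform G2 u.
have schur2 : schur G2 u v = qform G2 (v - a *: u).
  rewrite qform_sub_scale ?lt0r_neq0 // /a divfK ?lt0r_neq0 //.
  by rewrite subrr expr0n /= mul0r addr0.
rewrite schur2; apply: le_trans (G12 _); rewrite qform_sub_scale ?lt0r_neq0 //.
by rewrite lerDl divr_ge0 ?sqr_ge0 ?ltW.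
Qed.

Lemma qform_BFGS A G u v : A^T = A -> G^T = G ->
  qform (BFGS A G u) v = schur G u v + bform A v u ^+ 2 / qform A u.
Proof.
move=> sA sG; rewrite /BFGS /schur !qformE bformDm bformBm !bformZm !bform_rank1.
by rewrite (bform_sym u v sA) (bform_sym u v sG) -!qformE !expr2 ![_^-1 * _]mulrC.
Qed.

Lemma BFGS_sym A G u : A^T = A -> G^T = G -> (BFGS A G u)^T = BFGS A G u.
Proof.
move=> sA sG; rewrite /BFGS linearD linearB /= !linearZ /= !trmx_mul !trmxK sA sG.
by rewrite !mulmxA.
Qed.

Lemma loewner_BFGS_lower A G u c : A^T = A -> G^T = G ->
  0 < qform A u -> 0 < qform G u -> 1 <= c ->
  loewner_le A (c *: G) -> loewner_le A (c *: BFGS A G u).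
Proof.
move=> sA sG qA qG c1 AG v; have c0 : 0 < c by apply: lt_le_trans c1.
rewrite qformZm qform_BFGS // (qform_schur A u v) mulrDr -schurZ.
apply: lerD; first by apply: le_schur_loewner; rewrite ?trmx_scale_sym ?qformZm ?mulr_gt0.
by rewrite ler_peMl // divr_ge0 ?sqr_ge0 ?ltW.
Qed.

Lemma loewner_BFGS_upper A G u e : A^T = A -> G^T = G ->
  0 < qform A u -> 0 < qform G u -> 1 <= e ->
  loewner_le G (e *: A) -> loewner_le (BFGS A G u) (e *: A).
Proof.
move=> sA sG qA qG e1 GA v; have e0 : 0 < e by apply: lt_le_trans e1.
rewrite qformZm qform_BFGS // (qform_schur A u v) mulrDr -schurZ.
apply: lerD; first by apply: le_schur_loewner; rewrite ?trmx_scale_sym ?qformZm ?mulr_gt0.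
by rewrite ler_peMl // divr_ge0 ?sqr_ge0 ?ltW.
Qed.

End Loewner.

Section SelfConcordance.
Context {R : realType} {d : nat}.
Variables (hf : 'cV[R]_d -> 'M[R]_d) (M : R).
Hypothesis hf_sym : forall y, (hf y)^T = hf y.
Hypothesis hf_sc : forall y z w v,
  loewner_le (hf z - hf y) ((M * lnorm hf w (z - y)) *: hf v).
Local Notation mu := (@lebesgue_measure R).
Local Notation I01 := (`[0%R, 1%R]%classic : set R).

Lemma lnormZ w k h : lnorm hf w (k *: h) = `|k| * lnorm hf w h.
Proof. by rewrite /lnorm qformZv sqrtrM ?sqr_ge0 // sqrtr_sqr. Qed.

Variables (x s : 'cV[R]_d).
Let r := lnorm hf x s.

Lemma qform_segment_sc u a b v :
  qform (hf (x + a *: s)) u - qform (hf (x + b *: s)) u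
    <= M * r * qform (hf v) u * `|a - b|.
Proof.
have := hf_sc (x + b *: s) (x + a *: s) x v u.
rewrite qformZm !qformE bformBm -!qformE.
rewrite opprD addrACA subrr add0r -scalerBl lnormZ -/r; lra.
Qed.

Lemma continuous_qform_segment u : continuous (fun t : R => qform (hf (x + t *: s)) u).
Proof.
apply: (@lipschitz_continuous _ _ (M * r * qform (hf x) u)) => a b.
rewrite ler_norml -lerNl opprB; apply/andP; split; last exact: qform_segment_sc.
by rewrite distrC; exact: qform_segment_sc.
Qed.

Lemma continuous_hessian_segment_entry (i j : 'I_d) :
  continuous (fun t : R => hf (x + t *: s) i j).
Proof.
pose Qp (t : R) := qform (hf (x + t *: s)) (evec R i + evec R j).
pose Qm (t : R) := qform (hf (x + t *: s)) (evec R i - evec R j).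
rewrite (_ : (fun t => _) = fun t => (Qp t - Qm t) * 4^-1); last first.
  by apply/funext => t; rewrite -bform_evec bform_polar.
move=> t; apply: cvgM; last exact: cvg_cst.
by apply: continuousB; exact: continuous_qform_segment.
Qed.

Lemma qform_Jint u :
  qform (Jint hf x s) u = \int[mu]_(t in I01) qform (hf (x + t *: s)) u.
Proof.
have centry k l : continuous (fun t : R => u l 0 * hf (x + t *: s) l k * u k 0).
  move=> t; apply: cvgM; last exact: cvg_cst.
  by apply: cvgM; [exact: cvg_cst | exact: continuous_hessian_segment_entry].
under eq_Rintegral do rewrite qform_sum.
rewrite Rintegral01_sum => [|k]; last by apply: continuous_sum => l; exact: centry.
rewrite qform_sum; apply: eq_bigr => k _.
rewrite Rintegral01_sum //; apply: eq_bigr => l _; rewrite mxE.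
rewrite (_ : \int[mu]_(t in I01) _ = u l 0 * u k 0 * \int[mu]_(t in I01) hf (x + t *: s) l k).
  by rewrite mulrAC.
rewrite -RintegralZl //; last exact/continuous_integrable01/continuous_hessian_segment_entry.
by apply: eq_Rintegral => t _; rewrite mulrAC.
Qed.

Lemma Jint_sym : (Jint hf x s)^T = Jint hf x s.
Proof.
apply/matrixP => a b; rewrite !mxE; apply: eq_Rintegral => t _.
by rewrite -[in RHS]hf_sym mxE.
Qed.

Lemma Jint_le_hessian_endpoint tau : tau = 0 \/ tau = 1 ->
  loewner_le (Jint hf x s) ((1 + M * r / 2) *: hf (x + tau *: s)).
Proof.
move=> htau u; rewrite qform_Jint qformZm.
apply: (Rintegral01_le_endpoint htau) => [|t _]; first exact: continuous_qform_segment.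
have := qform_segment_sc u t tau (x + tau *: s); lra.
Qed.

Hypothesis M_ge0 : 0 <= M.
Hypothesis hf_psd : forall y u, 0 <= qform (hf y) u.

Lemma hessian_endpoint_le_Jint tau : tau = 0 \/ tau = 1 ->
  loewner_le (hf (x + tau *: s)) ((1 + M * r / 2) *: Jint hf x s).
Proof.
move=> htau u; rewrite qformZm qform_Jint.
apply: (Rintegral01_ge_endpoint htau) => // [||t _].
- by rewrite mulr_ge0 // sqrtr_ge0.
- exact: continuous_qform_segment.
- have := qform_segment_sc u tau t (x + t *: s); rewrite distrC; lra.
Qed.

End SelfConcordance.

Lemma exprDx_le_expR (R : realType) (a : R) n : -1 <= a -> (1 + a) ^+ n <= expR (n%:R * a).
Proof.
move=> a1; rewrite expRM_natl; apply: lerXn2r; rewrite ?nnegrE ?expR_ge0 //.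
  by rewrite -lerBlDl sub0r.
exact: expR_ge1Dx.
Qed.

Section SharpenedStep.
Context {R : realType} {d : nat}.
Variables (hf : 'cV[R]_d -> 'M[R]_d) (M : R).
Hypothesis hf_sym : forall y, (hf y)^T = hf y.
Hypothesis hf_sc : forall y z w v,
  loewner_le (hf z - hf y) ((M * lnorm hf w (z - y)) *: hf v).
Hypothesis M_ge0 : 0 <= M.
Hypothesis hf_pd : forall y (u : 'cV[R]_d), u != 0 -> 0 < qform (hf y) u.

Let hf_psd y u : 0 <= qform (hf y) u := qform_ge0_of_pd u (hf_pd y).

Variables (x s : 'cV[R]_d) (G : 'M[R]_d).
Hypothesis s_neq0 : s != 0.
Hypothesis G_sym : G^T = G.
Hypothesis hf_le_G : loewner_le (hf x) G.

Let r := lnorm hf x s.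
Let c := 1 + M * r / 2.
Let J := Jint hf x s.
Let Ghat := c ^+ 2 *: BFGS J G s.

Let c_ge1 : 1 <= c.
Proof. by rewrite /c lerDl divr_ge0 // mulr_ge0 // sqrtr_ge0. Qed.

Let c_gt0 : 0 < c. Proof. exact: lt_le_trans c_ge1. Qed.

Let c4_le_expR : c ^+ 4 <= expR (2 * M * r).
Proof.
rewrite (_ : 2 * M * r = 4%:R * (M * r / 2)); last by field.
apply: exprDx_le_expR; apply: le_trans (lerN10 _) _.
by rewrite divr_ge0 // mulr_ge0 // sqrtr_ge0.
Qed.

Let hf_le_J0 : loewner_le (hf x) (c *: J).
Proof.
have := hessian_endpoint_le_Jint hf_sym hf_sc x s M_ge0 hf_psd (or_introl erefl).
by rewrite scale0r addr0.
Qed.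

Let hf_le_J1 : loewner_le (hf (x + s)) (c *: J).
Proof.
have := hessian_endpoint_le_Jint hf_sym hf_sc x s M_ge0 hf_psd (or_intror erefl).
by rewrite scale1r.
Qed.

Let J_le_hf0 : loewner_le J (c *: hf x).
Proof.
have := Jint_le_hessian_endpoint hf_sym hf_sc x s (or_introl erefl).
by rewrite scale0r addr0.
Qed.

Let J_le_hf1 : loewner_le J (c *: hf (x + s)).
Proof.
have := Jint_le_hessian_endpoint hf_sym hf_sc x s (or_intror erefl).
by rewrite scale1r.
Qed.

Let qform_J_gt0 : 0 < qform J s.
Proof.
have := lt_le_trans (hf_pd x s_neq0) (hf_le_J0 s).
by rewrite qformZm pmulr_rgt0.
Qed.

Let qform_G_gt0 : 0 < qform G s := lt_le_trans (hf_pd x s_neq0) (hf_le_G s).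

Lemma Ghat_sym : Ghat^T = Ghat.
Proof. by apply/trmx_scale_sym/BFGS_sym => //; exact: Jint_sym. Qed.

Lemma hessian_le_Ghat : loewner_le (hf (x + s)) Ghat.
Proof.
have J_le_cG : loewner_le J (c *: G).
  move=> u; apply: le_trans (J_le_hf0 u) _.
  by rewrite !qformZm ler_wpM2l // ltW.
rewrite /Ghat expr2; apply: loewner_scale_trans (ltW c_gt0) hf_le_J1 _.
exact: loewner_BFGS_lower (Jint_sym hf_sym x s) G_sym qform_J_gt0 qform_G_gt0 c_ge1 J_le_cG.
Qed.

Lemma Ghat_le_hessian e : 1 <= e -> loewner_le G (e *: hf x) ->
  loewner_le Ghat ((e * expR (2 * M * r)) *: hf (x + s)).
Proof.
move=> e1 G_le_hf.
have ec1 : 1 <= e * c by rewrite mulr_ege1.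
have G_le_J : loewner_le G ((e * c) *: J).
  by apply: loewner_scale_trans G_le_hf hf_le_J0; exact: le_trans ler01 e1.
have Gbar_le_J :=
  loewner_BFGS_upper (Jint_sym hf_sym x s) G_sym qform_J_gt0 qform_G_gt0 ec1 G_le_J.
have Gbar_le_hf : loewner_le (BFGS J G s) ((e * c * c) *: hf (x + s)).
  by apply: loewner_scale_trans Gbar_le_J J_le_hf1; exact: le_trans ler01 ec1.
have Ghat_le_c4 : loewner_le Ghat ((e * c ^+ 4) *: hf (x + s)).
  move=> u; rewrite /Ghat !qformZm (_ : e * c ^+ 4 = c ^+ 2 * (e * c * c)).
    by rewrite -mulrA ler_wpM2l ?exprn_ge0 ?(ltW c_gt0) // -qformZm.
  by rewrite !exprS expr0; ring.
apply: loewner_trans Ghat_le_c4 _ => u.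
by rewrite !qformZm ler_wpM2r ?hf_psd // ler_wpM2l // (le_trans ler01).
Qed.

End SharpenedStep.

Section SharpenedBFGS.
Context {R : realType} {d : nat}.
Variables (gf : 'cV[R]_d -> 'cV[R]_d) (hf : 'cV[R]_d -> 'M[R]_d) (M : R).
Hypothesis hf_sym : forall y, (hf y)^T = hf y.
Hypothesis hf_sc : forall y z w v,
  loewner_le (hf z - hf y) ((M * lnorm hf w (z - y)) *: hf v).
Hypothesis M_ge0 : 0 <= M.
Hypothesis hf_pd : forall y (u : 'cV[R]_d), u != 0 -> 0 < qform (hf y) u.

(* The bounds hold whichever basis vector the final BFGS update uses: the
   maximality condition [is_ubar] only matters for the convergence rate. *)
Lemma sbfgs_step_bounds x x' G G' e :
  sbfgs_step gf hf M x G x' G' -> gf x != 0 ->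
  G^T = G -> loewner_le (hf x) G -> 1 <= e -> loewner_le G (e *: hf x) ->
  [/\ G'^T = G', loewner_le (hf x') G' &
      loewner_le G' ((e * expR (2 * M * lnorm hf x (x' - x))) *: hf x')].
Proof.
move=> [x'E [i [_ ->]]] gf_neq0 G_sym hf_le_G e1 G_le_hf.
set s := x' - x; have -> : x' = x + s by rewrite /s addrC subrK.
have s_neq0 : s != 0.
  rewrite /s x'E addrAC subrr add0r oppr_eq0; apply: invmx_mulmx_neq0.
  exact: lt_le_trans (hf_pd x gf_neq0) (hf_le_G _).
have Ghat_sym := Ghat_sym M hf_sym x s G_sym.
have hf_le_Ghat := hessian_le_Ghat hf_sym hf_sc M_ge0 hf_pd s_neq0 G_sym hf_le_G.
have qform_hf_gt0 := hf_pd (x + s) (evec_neq0 i).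
have qform_Ghat_gt0 := lt_le_trans qform_hf_gt0 (hf_le_Ghat (evec R i)).
split.
- exact: BFGS_sym.
- rewrite -[BFGS _ _ _]scale1r; apply: loewner_BFGS_lower => //.
  by rewrite scale1r.
- apply: loewner_BFGS_upper => //; last exact: Ghat_le_hessian.
  by rewrite mulr_ege1 // -expR0 ler_expR !mulr_ge0 // sqrtr_ge0.
Qed.

Variables (mu L : R) (x : nat -> 'cV[R]_d) (G : nat -> 'M[R]_d).
Hypothesis mu_gt0 : 0 < mu.
Hypothesis mu_le_L : mu <= L.
Hypothesis hf_bounds : forall y, loewner_le mu%:M (hf y) /\ loewner_le (hf y) L%:M.
Hypothesis G0 : G 0%N = L%:M.
Hypothesis sbfgs : forall t, sbfgs_step gf hf M (x t) (G t) (x t.+1) (G t.+1).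

Let xi t := expR (2 * M * \sum_(i < t) lnorm hf (x i) (x i.+1 - x i)).

Lemma sbfgs_loewner_bounds t : (forall i, (i < t)%N -> gf (x i) != 0) ->
  [/\ (G t)^T = G t, loewner_le (hf (x t)) (G t) &
      loewner_le (G t) ((xi t * (L / mu)) *: hf (x t))].
Proof.
have L_mu_ge1 : 1 <= L / mu by rewrite ler_pdivlMr // mul1r.
elim: t => [_|t IH gf_neq0].
  rewrite /xi big_ord0 mulr0 expR0 mul1r G0 tr_scalar_mx; split => // [|u].
    by case: (hf_bounds (x 0%N)).
  rewrite qformZm; apply: le_trans (_ : L / mu * qform mu%:M u <= _).
    by rewrite !qform_scalar_mx mulrA divfK ?gt_eqF.
  by rewrite ler_wpM2l ?(le_trans ler01) //; case: (hf_bounds (x 0%N)).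
have [G_sym hf_le_G G_le_hf] := IH (fun i it => gf_neq0 i (ltnW it)).
have xi_ge1 : 1 <= xi t * (L / mu).
  rewrite mulr_ege1 // -expR0 ler_expR mulr_ge0 ?mulr_ge0 //.
  by apply: sumr_ge0 => i _; exact: sqrtr_ge0.
have [G_sym' hf_le_G' G_le_hf'] :=
  sbfgs_step_bounds (sbfgs t) (gf_neq0 t (ltnSn t)) G_sym hf_le_G xi_ge1 G_le_hf.
split => //; apply: loewner_trans G_le_hf' _ => u.
by rewrite /xi big_ord_recr /= mulrDr expRD mulrAC.
Qed.

End SharpenedBFGS.

Unset Implicit Arguments.

Theorem mainTheorem4 (R : realType) (d : nat)
  (f : 'cV[R]_d -> R) (gf : 'cV[R]_d -> 'cV[R]_d) (hf : 'cV[R]_d -> 'M[R]_d)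
  (mu L M : R) (x : nat -> 'cV[R]_d) (G : nat -> 'M[R]_d) :
  0 < mu -> mu <= L -> 0 < M ->
  (forall y, differentiable f y /\ forall h, 'd f y h = ((gf y)^T *m h) 0 0) ->
  (forall y, differentiable gf y /\ forall h, 'd gf y h = hf y *m h) ->
  (forall y, (hf y)^T = hf y) ->
  (forall y, loewner_le (mu%:M) (hf y) /\ loewner_le (hf y) (L%:M)) ->
  (forall y z w v, loewner_le (hf z - hf y)
                              ((M * lnorm hf w (z - y)) *: hf v)) ->
  G 0%N = L%:M ->
  (forall t, sbfgs_step gf hf M (x t) (G t) (x t.+1) (G t.+1)) ->
  forall t : nat,
    (forall i, (i < t)%N -> gf (x i) != 0) ->
    let xi := expR (2 * M * \sum_(i < t) lnorm hf (x i) (x i.+1 - x i)) in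
    loewner_le (hf (x t)) (G t) /\
    loewner_le (G t) ((xi * (L / mu)) *: hf (x t)).
Proof.
move=> mu_gt0 mu_le_L M_gt0 _ _ hf_sym hf_bounds hf_sc G0 sbfgs t gf_neq0 /=.
have hf_pd y (u : 'cV[R]_d) : u != 0 -> 0 < qform (hf y) u.
  by apply: qform_gt0_scalar_le mu_gt0 (hf_bounds y).1.
by case: (sbfgs_loewner_bounds hf_sym hf_sc (ltW M_gt0) hf_pd mu_gt0 mu_le_L
                               hf_bounds G0 sbfgs gf_neq0).
Qed.
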